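(* Let $n\ge 3$, $m\ge 1$, and let $f=x_0^{a_0}x_1^{a_1}\cdots x_n^{a_n}x_{n+1}^{a_{n+1}}$ be a monomial. If $f\in I_{B_n}^{(m)}$, then $g=x_0^{t}x_1^{a_1}\cdots x_n^{a_n}x_{n+1}^{t}\in I_{B_n}^{(m)}$, where $t=\min\{a_0,a_{n+1}\}$.
   Context: Let $k$ be a field. $Q_n$ is the cycle graph on vertices $1,\dots,n$ (edges $\{i,i+1\}$ for $1\le i\le n-1$ and $\{n,1\}$). $B_n$ is the simplicial complex on $\{0,\dots,n+1\}$ with facets $\{0,i,j\}$ and $\{n+1,i,j\}$ for each edge $\{i,j\}$ of $Q_n$ (boundary of the bipyramid over $Q_n$), and $I_{B_n}\subset k[x_0,\dots,x_{n+1}]$ is its Stanley-Reisner ideal, generated by $\prod_{i\in\tau}x_i$ over non-faces $\tau$ of $B_n$. For a homogeneous ideal $I$ of $R$, $I^{(m)}=R\cap\bigcap_{P\in\mathrm{Ass}(I)}I^mR_P$. *)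

From mathcomp Require Import all_boot all_algebra.
From mathcomp Require Import mpoly.

Set Implicit Arguments. Unset Strict Implicit. Unset Printing Implicit Defensive.
Import GRing.Theory.
Local Open Scope ring_scope.

Section Defs.
Variable k : fieldType.
Variable N : nat.
Local Notation R := {mpoly k[N]}.

Definition ideal_gen (S : R -> Prop) (f : R) : Prop :=
  exists s : seq (R * R), (forall p, p \in s -> S p.2) /\
                          f = \sum_(p <- s) p.1 * p.2.

Definition ideal_pow (I : R -> Prop) (m : nat) : R -> Prop :=
  ideal_gen (fun f => exists s : seq R,
     size s = m /\ (forall g, g \in s -> I g) /\ f = \prod_(g <- s) g).

Definition is_ideal (P : R -> Prop) : Prop :=
  P 0 /\ (forall a b, P a -> P b -> P (a + b)) /\ (forall r a, P a -> P (r * a)).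

Definition is_prime_ideal (P : R -> Prop) : Prop :=
  is_ideal P /\ ~ P 1 /\ (forall a b, P (a * b) -> P a \/ P b).

Definition associated_prime (I P : R -> Prop) : Prop :=
  is_prime_ideal P /\ exists h : R, forall f, P f <-> I (f * h).

(* Symbolic power I^(m) = R ∩ ⋂_{P ∈ Ass(I)} I^m R_P.
   For f ∈ R, f/1 ∈ I^m R_P iff s f ∈ I^m for some s ∉ P (R is a domain). *)
Definition symbolic_power (I : R -> Prop) (m : nat) (f : R) : Prop :=
  forall P, associated_prime I P -> exists s : R, ~ P s /\ ideal_pow I m (s * f).

End Defs.

Definition cycle_edge (n i j : nat) : bool :=
  [&& (1 <= i <= n)%N, (1 <= j <= n)%N &
      [|| j == i.+1, i == j.+1, (i == 1%N) && (j == n) | (i == n) && (j == 1%N)]].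

Definition Bn_facet (n : nat) (F : {set 'I_(n.+2)}) : bool :=
  [exists i : 'I_(n.+2), exists j : 'I_(n.+2),
     cycle_edge n i j &&
     ((F == [set ord0; i; j]) || (F == [set ord_max; i; j]))].

Definition Bn_face (n : nat) (s : {set 'I_(n.+2)}) : bool :=
  [exists F : {set 'I_(n.+2)}, Bn_facet F && (s \subset F)].

Definition SR_Bn (k : fieldType) (n : nat) : {mpoly k[n.+2]} -> Prop :=
  ideal_gen (fun f => exists t : {set 'I_(n.+2)},
                ~~ Bn_face t /\ f = \prod_(i in t) 'X_i).

Definition monom (k : fieldType) (N : nat) (a : 'I_N -> nat) : {mpoly k[N]} :=
  \prod_(i < N) 'X_i ^+ a i.

Arguments SR_Bn k n : clear implicits.
Arguments monom k {N} a.

(* Swapping the two apexes x_0, x_{n+1} is a ring automorphism preserving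
   I_{B_n}, hence I^(m); it sends f = g x_0^d x_{n+1}^e to g x_0^e x_{n+1}^d,
   where min(d, e) = 0. Every facet of B_n contains an apex, so h x_0 and
   h x_{n+1} in I force h in I: no associated prime P contains both x_0 and
   x_{n+1}. Hence one of the two cofactors x_0^d x_{n+1}^e, x_0^e x_{n+1}^d is
   a unit in R_P, and g lies in I^m R_P for every P. *)
From mathcomp Require Import all_boot all_algebra.
From mathcomp Require Import mpoly.
From mathcomp Require Import fingroup perm zify.
From Stdlib Require Import Classical.
Set Implicit Arguments. Unset Strict Implicit. Unset Printing Implicit Defensive.
Import GRing.Theory.
Local Open Scope ring_scope.

Section Ideals.
Variables (k : fieldType) (N : nat).
Local Notation R := {mpoly k[N]}.
Implicit Types (I P : R -> Prop) (p : R).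

Lemma prime_notin_mul P a b : is_prime_ideal P -> ~ P a -> ~ P b -> ~ P (a * b).
Proof. by move=> [_ [_ Pprime]] Na Nb /Pprime []. Qed.

Lemma prime_notin_exp P x d : is_prime_ideal P -> d = 0%N \/ ~ P x -> ~ P (x ^+ d).
Proof.
move=> Pprime Nx; have N1 : ~ P 1 by case: Pprime => _ [].
case: Nx => [->|Nx]; first by rewrite expr0.
by elim: d => [|d IHd]; rewrite ?expr0 // exprS; apply: prime_notin_mul.
Qed.

Lemma prime_notin_monomial2 P x y d e :
  is_prime_ideal P -> ~ P x \/ ~ P y -> d = 0%N \/ e = 0%N ->
  ~ P (x ^+ d * y ^+ e) \/ ~ P (x ^+ e * y ^+ d).
Proof.
move=> Pprime Nxy de.
have notin d' e' : d' = 0%N \/ ~ P x -> e' = 0%N \/ ~ P y -> ~ P (x ^+ d' * y ^+ e').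
  by move=> Nx Ny; apply: prime_notin_mul => //; apply: prime_notin_exp.
by case: Nxy => Nxy; case: de => de; [right|left|left|right]; apply: notin; tauto.
Qed.

Lemma ideal_gen_rmorph (phi : {rmorphism R -> R}) (S S' : R -> Prop) p :
  (forall q, S q -> S' (phi q)) -> ideal_gen S p -> ideal_gen S' (phi p).
Proof.
move=> SS' [s [Ss ->]]; exists [seq (phi q.1, phi q.2) | q <- s]; split.
  by move=> _ /mapP[q qs ->]; apply/SS'/Ss.
by rewrite big_map rmorph_sum; apply: eq_bigr => q _; rewrite rmorphM.
Qed.

Lemma ideal_pow_rmorph (phi : {rmorphism R -> R}) I m p :
  (forall q, I q -> I (phi q)) -> ideal_pow I m p -> ideal_pow I m (phi p).
Proof.
move=> Iphi; apply: ideal_gen_rmorph => _ [s [sz_s [Is ->]]].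
exists (map phi s); rewrite size_map rmorph_prod big_map; split=> //; split=> //.
by move=> _ /mapP[g gs ->]; apply/Iphi/Is.
Qed.

Section Involution.
Variables (phi : {rmorphism R -> R}) (I : R -> Prop).
Hypotheses (phiK : involutive phi) (Iphi : forall q, I q -> I (phi q)).

Lemma ideal_rmorphE p : I (phi p) <-> I p.
Proof. by split=> [/Iphi|/Iphi //]; rewrite phiK. Qed.

Lemma associated_prime_rmorph P :
  associated_prime I P -> associated_prime I (fun f => P (phi f)).
Proof.
move=> [[[P0 [PD PM]] [P1 Pprime]] [h Ph]]; split; [split; [split|split] |].
- by rewrite rmorph0.
- split=> [a b Pa Pb|r a Pa]; first by rewrite rmorphD; apply: PD.
  by rewrite rmorphM; apply: PM.
- by rewrite rmorph1.
- by move=> a b; rewrite rmorphM; apply: Pprime.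
by exists (phi h) => f; rewrite Ph -ideal_rmorphE rmorphM phiK.
Qed.

Lemma symbolic_power_rmorph m f :
  symbolic_power I m f -> symbolic_power I m (phi f).
Proof.
move=> If P /associated_prime_rmorph /If [s [Ns Ipow]].
exists (phi s); split=> //; move/(ideal_pow_rmorph Iphi): Ipow.
by rewrite rmorphM.
Qed.

End Involution.

Lemma associated_prime_notin2 I P x y :
  (forall h, I (h * x) -> I (h * y) -> I h) ->
  associated_prime I P -> ~ P x \/ ~ P y.
Proof.
move=> Icolon [[_ [P1 _]] [h Ph]]; apply: not_and_or => -[/Ph hx /Ph hy].
by apply/P1/Ph; rewrite mul1r; apply: Icolon; rewrite mulrC.
Qed.

Lemma symbolic_power_of_mul_notin I m g :
  (forall P, associated_prime I P ->
     exists c, ~ P c /\ symbolic_power I m (g * c)) ->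
  symbolic_power I m g.
Proof.
move=> gc P PI; have [c [Nc /(_ P PI) [s [Ns Ipow]]]] := gc P PI.
exists (s * c); split; first by apply: prime_notin_mul => //; case: PI.
by rewrite -mulrA [c * _]mulrC.
Qed.

End Ideals.

Section Monomials.
Variables (k : fieldType) (N : nat).
Local Notation R := {mpoly k[N]}.
Implicit Types (a b : 'I_N -> nat).

Lemma msymX1 (s : 'S_N) (i : 'I_N) : msym s ('X_i : R) = 'X_(s i).
Proof. by rewrite /msym mmapX mmap1U. Qed.

Lemma msym_monom (s : 'S_N) a : msym s (monom k a) = monom k (fun i => a (s^-1 i)%g).
Proof.
rewrite /monom rmorph_prod [RHS](reindex_inj (@perm_inj _ s)) /=.
by apply: eq_bigr => i _; rewrite rmorphXn /= msymX1 permK.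
Qed.

Lemma eq_monom a b : a =1 b -> monom k a = monom k b.
Proof. by move=> ab; apply: eq_bigr => i _; rewrite ab. Qed.

Lemma monomE a : monom k a = 'X_[[multinom a i | i < N]].
Proof. by rewrite /monom mpolyXE_id; apply: eq_bigr => i _; rewrite mnmE. Qed.

Lemma monom_split a b (i j : 'I_N) :
  i != j -> (forall l, l != i -> l != j -> b l = a l) ->
  (b i <= a i)%N -> (b j <= a j)%N ->
  monom k a = monom k b * ('X_i ^+ (a i - b i) * 'X_j ^+ (a j - b j)).
Proof.
move=> ij ba bai baj; rewrite !monomE !mpolyXn -!mpolyXD; congr 'X_[_].
apply/mnmP => l; rewrite !(mnmDE, mulmnE, mnm1E, mnmE).
have [->|li] := eqVneq l i; first by rewrite eq_sym (negbTE ij) /=; lia.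
have [->|lj] := eqVneq l j; first by rewrite /=; lia.
by rewrite ba //=; lia.
Qed.

End Monomials.

Section StanleyReisner.
Variables (k : fieldType) (N : nat) (Delta : pred {set 'I_N}).
Local Notation R := {mpoly k[N]}.
Implicit Types (t A B : {set 'I_N}) (v : 'X_{1..N}).
Hypothesis Delta_sub : forall A B, B \subset A -> Delta A -> Delta B.

Definition SR_ideal : R -> Prop :=
  ideal_gen (fun f => exists t : {set 'I_N}, ~~ Delta t /\ f = \prod_(i in t) 'X_i).

Definition msupport v : {set 'I_N} := [set i | (0 < v i)%N].

Definition mindicator t : 'X_{1..N} := (\sum_(i in t) U_(i))%MM.

Lemma mindicatorE t i : mindicator t i = (i \in t).
Proof.
rewrite /mindicator mnm_sumE; case: (boolP (i \in t)) => it.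
  rewrite (bigD1 i) //= mnm1E eqxx big1 // => j /andP[_ ji].
  by rewrite mnm1E (negbTE ji).
by rewrite big1 // => j jt; rewrite mnm1E; case: eqP jt it => // ->->.
Qed.

Lemma prod_mpolyX_set t : \prod_(i in t) ('X_i : R) = 'X_[mindicator t].
Proof. by rewrite /mindicator (big_morph _ (@mpolyXD _ _) (@mpolyX0 _ _)). Qed.

Lemma msupport_mulX (i : 'I_N) v : msupport (U_(i) + v)%MM = i |: msupport v.
Proof. by apply/setP => j; rewrite !inE mnmDE mnm1E eq_sym; case: (j == i). Qed.

Lemma SR_idealP (p : R) :
  SR_ideal p <-> forall v, v \in msupp p -> ~~ Delta (msupport v).
Proof.
split=> [[s [Ss ->]] v|Delta_p].
  rewrite mcoeff_msupp raddf_sum => nz.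
  have /hasP[q qs] : has (fun q : R * R => (q.1 * q.2)@_v != 0) s.
    apply: contraR nz => /hasPn nz_q; rewrite big1_seq //.
    by move=> q /andP[_ /nz_q /negbNE /eqP].
  have [t [Nt ->]] := Ss q qs; rewrite prod_mpolyX_set -mcoeff_msupp.
  rewrite (perm_mem (msuppMX _ _)) => /mapP[w _ ->].
  apply: contra Nt; apply: Delta_sub; apply/subsetP => i it.
  by rewrite inE mnmDE mindicatorE it.
rewrite (mpolyE p).
exists [seq (p@_v *: 'X_[v - mindicator (msupport v)],
             \prod_(i in msupport v) ('X_i : R)) | v <- msupp p]; split.
  by move=> _ /mapP[v vp ->]; exists (msupport v); split=> //; apply: Delta_p.
rewrite [RHS]big_map; apply: eq_bigr => v _ /=.
rewrite prod_mpolyX_set -scalerAl -mpolyXD submK //.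
by apply/mnm_lepP => i; rewrite mindicatorE inE; case: ltnP.
Qed.

Lemma SR_ideal_msym (s : 'S_N) (p : R) :
  (forall t, Delta (s @: t) -> Delta t) -> SR_ideal p -> SR_ideal (msym s p).
Proof.
move=> Delta_s; apply: ideal_gen_rmorph => _ [t [Nt ->]].
exists (s @: t); split; first by apply: contra Nt; apply: Delta_s.
rewrite rmorph_prod big_imset /=; last by move=> i j _ _; apply: perm_inj.
by apply: eq_bigr => i _; rewrite msymX1.
Qed.

Lemma SR_ideal_colonX2 (i j : 'I_N) (h : R) :
  (forall A, Delta A -> Delta (i |: A) || Delta (j |: A)) ->
  SR_ideal (h * 'X_i) -> SR_ideal (h * 'X_j) -> SR_ideal h.
Proof.
move=> Delta_cone /SR_idealP hi /SR_idealP hj; apply/SR_idealP => v hv.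
have in_mulX l : (U_(l) + v)%MM \in msupp (h * 'X_l).
  by rewrite mcoeff_msupp mcoeffMX -mcoeff_msupp.
move: (hi _ (in_mulX i)) (hj _ (in_mulX j)); rewrite !msupport_mulX.
by move=> Ni Nj; apply/negP => /Delta_cone; rewrite (negbTE Ni) (negbTE Nj).
Qed.

End StanleyReisner.

Section Bipyramid.
Variable n : nat.
Local Notation V := 'I_(n.+2).
Local Notation swap := (tperm (ord0 : V) ord_max).
Implicit Types (t A B F : {set V}).

Lemma Bn_face_sub A B : B \subset A -> Bn_face A -> Bn_face B.
Proof.
move=> BA /existsP[F /andP[facet_F AF]]; apply/existsP; exists F.
by rewrite facet_F (subset_trans BA).
Qed.

Lemma Bn_face_cone A : Bn_face A -> Bn_face (ord0 |: A) || Bn_face (ord_max |: A).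
Proof.
case/existsP => F /andP[facet_F AF].
case/existsP: (facet_F) => i /existsP[j /andP[_ /orP[]/eqP F_def]]; apply/orP.
  by left; apply/existsP; exists F; rewrite facet_F subUset sub1set AF F_def !inE eqxx.
by right; apply/existsP; exists F; rewrite facet_F subUset sub1set AF F_def !inE eqxx.
Qed.

Lemma swap_cycle_vertex (i : V) : (1 <= i <= n)%N -> swap i = i.
Proof. by case/andP => i1 iN; rewrite tpermD // -val_eqE /= ?neq_ltn; lia. Qed.

Lemma Bn_facet_swap F : Bn_facet F -> Bn_facet (swap @: F).
Proof.
case/existsP => i /existsP[j /andP[ij F_def]].
apply/existsP; exists i; apply/existsP; exists j; rewrite ij /=.
case/and3P: ij => /swap_cycle_vertex si /swap_cycle_vertex sj _.
case/orP: F_def => /eqP ->; rewrite ?imsetU1 ?imsetU !imset_set1 si sj.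
  by rewrite tpermL eqxx orbT.
by rewrite tpermR eqxx.
Qed.

Lemma Bn_face_swap t : Bn_face (swap @: t) -> Bn_face t.
Proof.
case/existsP => F /andP[facet_F tF]; apply/existsP; exists (swap @: F).
rewrite Bn_facet_swap //=; apply: subset_trans (imsetS swap tF).
by apply/subsetP => x xt; rewrite -[x](tpermK ord0 ord_max); do 2!apply: imset_f.
Qed.

Definition apex_min (a : V -> nat) : V -> nat :=
  fun i => if (i == ord0) || (i == ord_max) then minn (a ord0) (a ord_max) else a i.

Lemma apex_min_swap a : apex_min (fun i => a (swap i)) =1 apex_min a.
Proof.
move=> i; rewrite /apex_min tpermL tpermR minnC.
by case: eqP => [//|i0]; case: eqP => [//|iN]; rewrite tpermD // eq_sym; apply/eqP.
Qed.

Lemma monom_apex_split (k : fieldType) a :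
  monom k a = monom k (apex_min a) *
    ('X_ord0 ^+ (a ord0 - minn (a ord0) (a ord_max)) *
     'X_ord_max ^+ (a ord_max - minn (a ord0) (a ord_max))).
Proof.
have a0 : apex_min a ord0 = minn (a ord0) (a ord_max) by rewrite /apex_min eqxx.
have aN : apex_min a ord_max = minn (a ord0) (a ord_max) by rewrite /apex_min eqxx orbT.
rewrite (@monom_split _ _ a (apex_min a) ord0 ord_max) ?a0 ?aN ?geq_minl ?geq_minr //.
by move=> l /negbTE l0 /negbTE lN; rewrite /apex_min l0 lN.
Qed.

Lemma msym_swapK (k : fieldType) : involutive (@msym n.+2 k swap).
Proof. by move=> p; rewrite -msymMm tperm2 msym1m. Qed.

Lemma SR_Bn_msym_swap (k : fieldType) (p : {mpoly k[n.+2]}) :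
  SR_Bn k n p -> SR_Bn k n (msym swap p).
Proof. exact/SR_ideal_msym/Bn_face_swap. Qed.

Lemma associated_prime_SR_Bn (k : fieldType) (P : {mpoly k[n.+2]} -> Prop) :
  associated_prime (SR_Bn k n) P -> ~ P 'X_ord0 \/ ~ P 'X_ord_max.
Proof.
apply: associated_prime_notin2 => h.
exact/SR_ideal_colonX2/Bn_face_cone/Bn_face_sub.
Qed.

End Bipyramid.

Local Close Scope ring_scope.

Theorem lemma3p8 (k : fieldType) (n m : nat) (a : 'I_(n.+2) -> nat) :
  3 <= n -> 1 <= m ->
  symbolic_power (SR_Bn k n) m (monom k a) ->
  symbolic_power (SR_Bn k n) m
    (monom k (fun i : 'I_(n.+2) =>
       if (i == ord0) || (i == ord_max) then minn (a ord0) (a ord_max) else a i)).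
Proof.
move=> _ _ Ia; change (symbolic_power (SR_Bn k n) m (monom k (apex_min a))).
have Iswap := symbolic_power_rmorph (@msym_swapK n k) (@SR_Bn_msym_swap n k) Ia.
rewrite /= msym_monom tpermV monom_apex_split (eq_monom _ (apex_min_swap a)) /= in Iswap.
rewrite monom_apex_split in Ia; rewrite tpermL tpermR minnC in Iswap.
apply: symbolic_power_of_mul_notin => P PI.
have Pprime : is_prime_ideal P by case: PI.
have min0 : a ord0 - minn (a ord0) (a ord_max) = 0 \/
            a ord_max - minn (a ord0) (a ord_max) = 0 by lia.
have [Na|Nswap] := prime_notin_monomial2 Pprime (associated_prime_SR_Bn PI) min0.
- by eexists; split; [exact: Na | exact: Ia].
- by eexists; split; [exact: Nswap | exact: Iswap].
Qed.
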